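(* Let $\psi=\mathcal{X}_{[0,1/2)}-\mathcal{X}_{[1/2,1)}$ be the Haar wavelet, and let $\{a_I:I\in\mathcal{D}\}$ be independent random variables with $\sum_I\mathscr{E}|a_I|<\infty$ and $a_I\in\mathscr{G}(\nu)$ for all $I$, for some $\nu>0$. For $x\neq y$ in $\mathbb{R}^+$ let $K(x,y;\cdot)=\sum_{I\in\mathcal{D}}a_I\psi_I(x)\psi_I(y)\in L^2(\Omega,d\mathscr{P})$. Then there is a constant $B$ such that for all $x,y,x',y'\in\mathbb{R}^+$ with $x\ne y$: (a) $\|K(x,y;\cdot)\|_{L^2(\Omega,d\mathscr{P})}\leq \dfrac{B}{\delta(x,y)}$; (b.i) $\|K(x',y;\cdot)-K(x,y;\cdot)\|_{L^2(\Omega,d\mathscr{P})}\leq B\dfrac{\delta(x',x)}{\delta(x,y)^2}$ whenever $2\delta(x',x)\leq\delta(x,y)$; (b.ii) $\|K(x,y';\cdot)-K(x,y;\cdot)\|_{L^2(\Omega,d\mathscr{P})}\leq B\dfrac{\delta(y',y)}{\delta(x,y)^2}$ whenever $2\delta(y',y)\leq\delta(x,y)$.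
   Context: $\mathcal{D}=\bigcup_{j\in\mathbb{Z}}\{[k2^{-j},(k+1)2^{-j}):k\in\mathbb{Z}\}$ is the family of dyadic intervals of $\mathbb{R}$, and $\mathcal{D}^+$ the dyadic intervals contained in $\mathbb{R}^+=[0,\infty)$; for $I=[k2^{-j},(k+1)2^{-j})$, $\psi_I(x)=2^{j/2}\psi(2^jx-k)$. The dyadic distance on $\mathbb{R}^+$ is $\delta(x,y)=\inf\{|I|: x,y\in I,\ I\in\mathcal{D}^+\}$ (with $|I|$ the length of $I$). For an integrable random variable $X$, $\eta_{X-\mathscr{E}X}(\lambda)=\log \mathscr{E}e^{\lambda(X-\mathscr{E}X)}$, and $X\in\mathscr{G}(\nu)$ means $X$ is integrable and $\eta_{X-\mathscr{E}X}(\lambda)\leq \lambda^2\nu/2$ for all $\lambda\in\mathbb{R}$. *)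

From HB Require Import structures.
From mathcomp Require Import all_boot all_order all_algebra.
From mathcomp Require Import all_classical all_reals all_analysis.
Set Implicit Arguments. Unset Strict Implicit. Unset Printing Implicit Defensive.
Import Order.TTheory GRing.Theory Num.Theory.
Import numFieldNormedType.Exports.
Local Open Scope classical_set_scope.
Local Open Scope ring_scope.

(* A dyadic interval I = [k 2^-j, (k+1) 2^-j) is indexed by the pair (j,k). *)
Definition dyad := (int * int)%type.

Definition in_dyad {R : realType} (I : dyad) (x : R) : Prop :=
  (I.2%:~R * (2:R) ^ (- I.1) <= x) /\ (x < (I.2 + 1)%:~R * (2:R) ^ (- I.1)).

Definition haar {R : realType} (t : R) : R :=
  (if (0 <= t) && (t < 2^-1) then 1 else 0) -
  (if (2^-1 <= t) && (t < 1) then 1 else 0).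

Definition haarI {R : realType} (I : dyad) (x : R) : R :=
  (Num.sqrt (2:R)) ^ I.1 * haar ((2:R) ^ I.1 * x - I.2%:~R).

(* dyadic distance on R^+ : inf { |I| : x, y in I, I in D^+ } ; |I| = 2^-j,
   and I is contained in [0,oo) iff k >= 0. *)
Definition ddist {R : realType} (x y : R) : R :=
  inf [set r : R | exists I : dyad,
        0 <= I.2 /\ in_dyad I x /\ in_dyad I y /\ r = (2:R) ^ (- I.1)].

Definition independent_family {d} {T : measurableType d} {R : realType}
  (P : probability T R) (a : dyad -> T -> R) : Prop :=
  forall (s : seq dyad) (B : dyad -> set R),
    uniq s -> (forall i, measurable (B i)) ->
    (P (\bigcap_(i in [set` s]) (a i @^-1` B i)) =
     \prod_(i <- s) P (a i @^-1` B i))%E.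

Definition mgf_centered {d} {T : measurableType d} {R : realType}
  (P : probability T R) (X : T -> R) (lambda : R) : T -> R :=
  fun w => expR (lambda * (X w - fine 'E_P[X])).

(* X in G(nu): X integrable and eta_{X-EX}(lambda) <= lambda^2 nu / 2 for all
   lambda (in particular E e^{lambda(X-EX)} is finite so that the log is real) *)
Definition subG {d} {T : measurableType d} {R : realType}
  (P : probability T R) (nu : R) (X : T -> R) : Prop :=
  P.-integrable setT (EFin \o X) /\
  forall lambda : R,
    ('E_P[mgf_centered P X lambda] < +oo)%E /\
    ln (fine 'E_P[mgf_centered P X lambda]) <= lambda ^+ 2 * nu / 2.

(* Partial sum of sum_{I in D} a_I(w) psi_I(x) psi_I(y) over the finite box
   |j| <= N, |k| <= 4^N; these boxes exhaust D = Z x Z. *)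
Definition Kpart {T : Type} {R : realType} (a : dyad -> T -> R) (x y : R)
  (N : nat) (w : T) : R :=
  \sum_(i < (N.*2).+1) \sum_(l < (4 ^ N).*2.+1)
     let I := ((i%:Z - N%:Z)%R, (l%:Z - (4 ^ N)%:Z)%R) in
     a I w * haarI I x * haarI I y.

Definition Kfun {T : Type} {R : realType} (a : dyad -> T -> R) (x y : R)
  (w : T) : R :=
  limn (fun N => Kpart a x y N w).

From HB Require Import structures.
From mathcomp Require Import all_boot all_order all_algebra.
From mathcomp Require Import all_classical all_reals all_analysis.
From mathcomp Require Import ring lra zify.
From mathcomp Require Import measurable_realfun.
Import Order.TTheory GRing.Theory Num.Theory.
Import numFieldNormedType.Exports.
Local Open Scope classical_set_scope.
Local Open Scope ring_scope.
Set Implicit Arguments. Unset Strict Implicit. Unset Printing Implicit Defensive.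

(* (b) is exact: if 2 delta(x', x) <= delta(x, y), then x and x' share a dyadic
   interval J shorter than delta(x, y).  Every psi_I with I coarser than J is
   constant on J, while an I at least as fine as J cannot contain y together
   with x or x'.  Hence psi_I(x') psi_I(y) = psi_I(x) psi_I(y) for all I, so
   K(x', y) = K(x, y) and the differences in (b.i), (b.ii) vanish identically
   (haarI_prod_stable).

   (a): with weights c_I = |psi_I(x) psi_I(y)|, at most one interval per level
   contributes, with c_I <= 2^j and only when 2^-j >= delta(x, y); a geometric
   series gives sum_I c_I <= 2 / delta(x, y) (haar_weight_sum_le).  By
   Cauchy-Schwarz, K_N^2 <= (sum_I c_I)(sum_I c_I a_I^2) for the partial sums,
   and Fatou's lemma yields E K^2 <= (2 / delta)^2 sup_I E a_I^2.  Finally the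
   subgaussian bound and the summability of E|a_I| bound E a_I^2 uniformly
   (subG_second_moment). *)

Section DyadicIntervals.
Variable R : realType.
Implicit Types (x y u : R) (I : dyad) (j k : int).

Lemma pow2_gt0 j : 0 < (2:R) ^ j.
Proof. exact: exprz_gt0. Qed.

Definition in_dyadic I x : bool :=
  (I.2%:~R <= (2:R) ^ I.1 * x) && ((2:R) ^ I.1 * x < (I.2 + 1)%:~R).

Lemma in_dyadP I x : in_dyad I x <-> in_dyadic I x.
Proof.
case: I => j k; rewrite /in_dyad /in_dyadic /= -!invr_expz.
have p := pow2_gt0 j.
rewrite [k%:~R * _]mulrC ler_pdivrMl // [_ * _^-1]mulrC ltr_pdivlMl //.
by split => [[-> ->]|/andP[-> ->]].
Qed.

Lemma scaled_int_le (m k k' : int) u : 0 < m ->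
  k'%:~R <= m%:~R * u -> m%:~R * u < (k' + 1)%:~R -> (k%:~R <= u) = (m * k <= k').
Proof.
move=> m0 lo hi; have m0R : 0 < m%:~R :> R by rewrite ltr0z.
apply/idP/idP => [ku|mk].
  have : (m * k)%:~R < (k' + 1)%:~R :> R.
    by rewrite intrM; apply: le_lt_trans hi; rewrite ler_pM2l.
  by rewrite ltr_int => h; lia.
by rewrite -(ler_pM2l m0R) -intrM; apply: le_trans lo; rewrite ler_int.
Qed.

(* Membership in a dyadic interval of level j is determined by the index of
   the level-(j+n) interval containing the point: the level-j interval k is the
   union of the level-(j+n) intervals 2^n k, ..., 2^n (k+1) - 1. *)
Lemma in_dyadic_refine j k k' (n : nat) x : in_dyadic (j + n%:Z, k') x ->
  in_dyadic (j, k) x = (2 ^+ n * k <= k') && ~~ (2 ^+ n * (k + 1) <= k').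
Proof.
rewrite /in_dyadic /= expfzDr ?pnatr_eq0 // => /andP[lo hi].
have e : (2:R) ^ n%:Z = (2 ^+ n : int)%:~R by rewrite rmorphXn.
have m0 : (0 : int) < 2 ^+ n by rewrite exprn_gt0.
rewrite (_ : 2 ^ j * 2 ^ n%:Z * x = (2 ^+ n : int)%:~R * (2 ^ j * x)) in lo hi;
  last by rewrite -e; ring.
by rewrite -(scaled_int_le _ m0 lo hi) -(scaled_int_le _ m0 lo hi) -ltNge.
Qed.

Lemma in_dyadic_nested j k j' k' x x' : j <= j' ->
  in_dyadic (j', k') x -> in_dyadic (j', k') x' ->
  in_dyadic (j, k) x = in_dyadic (j, k) x'.
Proof.
move=> jj'; have -> : j' = j + `|j' - j|%N%:Z by rewrite gez0_abs ?subr_ge0 //; lia.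
by move=> hx hx'; rewrite (in_dyadic_refine _ hx) (in_dyadic_refine _ hx').
Qed.

Lemma in_dyadic_uniq j k k' x : in_dyadic (j, k) x -> in_dyadic (j, k') x -> k = k'.
Proof.
rewrite /in_dyadic /= => /andP[a1 a2] /andP[b1 b2].
have := le_lt_trans a1 b2; have := le_lt_trans b1 a2.
by rewrite !ltr_int => *; lia.
Qed.

Lemma haarI_support I x : haarI I x != 0 -> in_dyadic I x.
Proof.
case: I => j k; rewrite /haarI /haar /in_dyadic /= mulf_eq0 negb_or => /andP[_].
rewrite intrD; set t := 2 ^ j * x - k%:~R.
have -> : 2 ^ j * x = t + k%:~R by rewrite /t subrK.
case: ifP => [/andP[h1 h2] _|_]; first by apply/andP; split; lra.
case: ifP => [/andP[h1 h2] _|_]; first by apply/andP; split; lra.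
by rewrite subrr eqxx.
Qed.

Lemma haar_split j k x : haar ((2:R) ^ j * x - k%:~R) =
  (if in_dyadic (j + 1, 2 * k) x then 1 else 0) -
  (if in_dyadic (j + 1, 2 * k + 1) x then 1 else 0).
Proof.
rewrite /haar /in_dyadic /= expfzDr ?pnatr_eq0 // expr1z.
rewrite -mulrA [2 * x]mulrC mulrA [_ * x * 2]mulrC.
rewrite !intrD !intrM /=; set u := 2 ^ j * x.
by congr (_ - _); congr (if _ then _ else _); apply/idP/idP => /andP[h1 h2];
  apply/andP; split; lra.
Qed.

Lemma haarI_const j k j' k' x x' : j + 1 <= j' ->
  in_dyadic (j', k') x -> in_dyadic (j', k') x' -> haarI (j, k) x = haarI (j, k) x'.
Proof.
move=> jj' hx hx'; rewrite /haarI /= !haar_split.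
by rewrite (in_dyadic_nested (2 * k) jj' hx hx') (in_dyadic_nested (2 * k + 1) jj' hx hx').
Qed.

Lemma haar_abs_le1 (t : R) : `|haar t| <= 1.
Proof.
by rewrite /haar; do 2 case: ifP => _; rewrite ?subrr ?normr0 ?subr0 ?sub0r ?normrN ?normr1.
Qed.

Lemma haarI_prod_le I x y :
  `|haarI I x * haarI I y| <= (2:R) ^ I.1 * (in_dyadic I x && in_dyadic I y)%:R.
Proof.
case: (boolP (in_dyadic I x && in_dyadic I y)) => [_|/nandP hn]; last first.
  rewrite mulr0 normr_le0 mulf_eq0; apply/orP.
  by case: hn => /negP hn; [left|right]; apply/negPn/negP => /haarI_support.
case: I => j k; rewrite /haarI /= mulr1 mulrACA normrM.
have e : Num.sqrt (2:R) ^ j * Num.sqrt 2 ^ j = 2 ^ j.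
  by rewrite -expfzMl -expr2 sqr_sqrtr.
rewrite e ger0_norm ?exprz_ge0 // ler_piMr ?exprz_ge0 // normrM.
by rewrite -[1]mulr1; apply: ler_pM => //; exact: haar_abs_le1.
Qed.

End DyadicIntervals.

Section DyadicDistance.
Variable R : realType.
Implicit Types (x y : R) (I : dyad).

Definition cover_lengths x y : set R := [set r : R | exists I : dyad,
  0 <= I.2 /\ in_dyad I x /\ in_dyad I y /\ r = (2:R) ^ (- I.1)].

Lemma ddistE x y : ddist x y = inf (cover_lengths x y).
Proof. by []. Qed.

Lemma cover_lengths_lb x y : lbound (cover_lengths x y) 0.
Proof. by move=> _ [I [_ [_ [_ ->]]]]; exact/ltW/pow2_gt0. Qed.

Lemma ddistC x y : ddist x y = ddist y x.
Proof.
rewrite !ddistE; congr inf; apply/seteqP.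
by split => r [I [k0 [hx [hy ->]]]]; exists I.
Qed.

Lemma in_dyadic_pos I x : 0 <= x -> in_dyadic I x -> 0 <= I.2.
Proof.
case: I => j k /= x0 /andP[_ h].
have : 0%:~R < (k + 1)%:~R :> R.
  by apply: le_lt_trans h; rewrite mulr_ge0 // ltW // pow2_gt0.
by rewrite ltr_int => h'; lia.
Qed.

Lemma cover_lengthsP I x y : 0 <= x -> in_dyadic I x -> in_dyadic I y ->
  cover_lengths x y (2 ^ (- I.1)).
Proof.
move=> x0 hx hy; exists I; split; first exact: in_dyadic_pos hx.
by split; [apply/in_dyadP|split; [apply/in_dyadP|]].
Qed.

Lemma ddist_le I x y : 0 <= x -> in_dyadic I x -> in_dyadic I y ->
  ddist x y <= 2 ^ (- I.1).
Proof.
move=> x0 hx hy; apply: ge_inf; first by exists 0; exact: cover_lengths_lb.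
exact: cover_lengthsP.
Qed.

Lemma ddist_ge0 x y : 0 <= ddist x y.
Proof.
rewrite ddistE; have [ne|e] := pselect (cover_lengths x y !=set0).
  exact: lb_le_inf ne (@cover_lengths_lb x y).
have -> : cover_lengths x y = set0 by apply/seteqP; split => // r hr; apply: e; exists r.
by rewrite inf0.
Qed.

(* Any two points of R^+ lie in a common dyadic interval [0, 2^n). *)
Lemma common_dyadic x y : 0 <= x -> 0 <= y -> exists I, in_dyadic I x && in_dyadic I y.
Proof.
move=> x0 y0; set n := Num.bound (Num.max x y).
have hb : Num.max x y < n%:R by apply: archi_boundP; rewrite le_max x0.
have hn : (n%:R : R) < 2 ^+ n by rewrite -natrX ltr_nat ltn_expl.
have inI : forall z, 0 <= z -> z <= Num.max x y -> in_dyadic (- n%:Z, 0) z.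
  move=> z z0 zm; rewrite /in_dyadic /= add0r mulr_ge0 ?exprz_ge0 //=.
  rewrite -invr_expz ltr_pdivrMl ?pow2_gt0 // mulr1; change (z < (2:R) ^+ n); lra.
by exists (- n%:Z, 0); rewrite !inI // ?le_max ?lexx ?orbT.
Qed.

Lemma cover_lengths_neq0 x y : 0 <= x -> 0 <= y -> cover_lengths x y !=set0.
Proof.
move=> x0 y0; have [I /andP[hx hy]] := common_dyadic x0 y0.
by exists (2 ^ (- I.1)); exact: cover_lengthsP.
Qed.

(* delta(x, y) >= |x - y| > 0 for distinct points. *)
Lemma ddist_gt0 x y : 0 <= x -> 0 <= y -> x != y -> 0 < ddist x y.
Proof.
move=> x0 y0 xy; apply: (@lt_le_trans _ _ `|x - y|); first by rewrite normr_gt0 subr_eq0.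
rewrite ddistE; apply: lb_le_inf; first exact: cover_lengths_neq0.
move=> _ [[j k] [_ [/in_dyadP/andP[h1 h2] [/in_dyadP/andP[h3 h4] ->]]]].
rewrite /= intrD in h1 h2 h3 h4; have p := pow2_gt0 R j.
have -> : `|x - y| = (2 ^ j)^-1 * `|2 ^ j * x - 2 ^ j * y|.
  by rewrite -mulrBr normrM (gtr0_norm p) mulKf // gt_eqF.
rewrite -invr_expz ler_pdivrMl // mulfV ?gt_eqF // ler_norml; apply/andP; split; lra.
Qed.

Lemma ddist_approx x y e : 0 <= x -> 0 <= y -> 0 < e ->
  exists I, [/\ in_dyadic I x, in_dyadic I y & 2 ^ (- I.1) < ddist x y + e].
Proof.
move=> x0 y0 e0; have hlb : has_lbound (cover_lengths x y).
  by exists 0; exact: cover_lengths_lb.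
have [_ [I [_ [hx [hy ->]]]] hr] := inf_adherent e0 (conj (cover_lengths_neq0 x0 y0) hlb).
by exists I; split => //; apply/in_dyadP.
Qed.

(* Indeed x and x' lie in a
   common interval J with |J| < delta(x, y); if I is coarser than J then psi_I
   is constant on J, and otherwise I cannot contain y together with x or x'. *)
Lemma haarI_prod_stable x y x' : 0 <= x -> 0 <= y -> 0 <= x' -> x != y ->
  2 * ddist x' x <= ddist x y ->
  forall I, haarI I x' * haarI I y = haarI I x * haarI I y.
Proof.
move=> x0 y0 x'0 xy hd; have d0 := ddist_gt0 x0 y0 xy.
have [[j' k'] [hx' hx hJ]] := ddist_approx x'0 x0 (divr_gt0 d0 (ltr0n _ 4)).
have Jsmall : 2 ^ (- j') < ddist x y by move: hJ hd => /=; lra.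
move=> [j k]; have [jj'|j'j] := leP (j + 1) j'; first by rewrite (haarI_const k jj' hx' hx).
have vanish z : in_dyadic (j', k') z -> haarI (j, k) z * haarI (j, k) y = 0.
  move=> hz; apply/eqP/negPn/negP; rewrite mulf_eq0 negb_or => /andP[/haarI_support iz /haarI_support iy].
  have jy : in_dyadic (j', k') y by rewrite -(in_dyadic_nested k' _ iz iy) //; lia.
  by have := ddist_le x0 hx jy; lra.
by rewrite !vanish.
Qed.

End DyadicDistance.

Section RealInequalities.
Variable R : realType.

(* One step of the Cauchy-Schwarz induction: if t^2 <= s q and T^2 <= S Q then
   (t + T)^2 <= (s + S)(q + Q), because 2 t T <= 2 sqrt(s q S Q) <= s Q + S q. *)
Lemma cauchy_schwarz_step (t T s S q Q : R) : 0 <= s -> 0 <= S -> 0 <= q -> 0 <= Q ->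
  t ^+ 2 <= s * q -> T ^+ 2 <= S * Q -> (t + T) ^+ 2 <= (s + S) * (q + Q).
Proof.
move=> s0 S0 q0 Q0 h1 h2.
suff cross : 2 * t * T <= s * Q + S * q by nra.
have [tT0|tT0] := lerP (2 * t * T) 0; first nra.
have amgm : 4 * ((s * q) * (S * Q)) <= (s * Q + S * q) ^+ 2.
  by have := sqr_ge0 (s * Q - S * q); rewrite !expr2; lra.
have prod : (t * T) ^+ 2 <= (s * q) * (S * Q).
  by rewrite exprMn; apply: ler_pM => //; exact: sqr_ge0.
have sq : (2 * t * T) ^+ 2 <= (s * Q + S * q) ^+ 2.
  by rewrite (_ : (2 * t * T) ^+ 2 = 4 * (t * T) ^+ 2); [lra | rewrite !expr2; lra].
by move: sq; rewrite ler_sqr // nnegrE; [exact: ltW | nra].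
Qed.

Lemma cauchy_schwarz (I : Type) (r : seq I) (S T Q : I -> R) :
  (forall i, 0 <= S i) -> (forall i, 0 <= Q i) -> (forall i, T i ^+ 2 <= S i * Q i) ->
  (\sum_(i <- r) T i) ^+ 2 <= (\sum_(i <- r) S i) * (\sum_(i <- r) Q i).
Proof.
move=> S0 Q0 h; elim: r => [|i r IH]; first by rewrite !big_nil mul0r expr0n.
by rewrite !big_cons; apply: cauchy_schwarz_step => //; exact: sumr_ge0.
Qed.

Lemma sum_at_most_one_le (n : nat) (f : 'I_n -> R) (M : R) : 0 <= M ->
  (forall l, 0 <= f l <= M) -> (forall l l', f l != 0 -> f l' != 0 -> l = l') ->
  \sum_(l < n) f l <= M.
Proof.
move=> M0 hb hu; have [l0 h0|none] := pickP (fun l => f l != 0).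
  rewrite (bigD1 l0) //= big1 ?addr0; first by case/andP: (hb l0).
  by move=> l nl; apply: contraNeq nl => fl; apply/eqP; exact: hu.
by rewrite big1 // => l _; apply/eqP/negbNE; rewrite none.
Qed.

End RealInequalities.

Section LiminfFacts.
Local Open Scope ereal_scope.
Variable R : realType.
Implicit Types u v : (\bar R)^nat.

Lemma limn_einf_ge0 u : (forall n, 0 <= u n) -> 0 <= limn_einf u.
Proof.
move=> h; rewrite limn_einf_lim; apply: lime_ge; first exact: is_cvg_einfs.
by apply: nearW => n; apply: le_ereal_inf_tmp => _ [k _ <-].
Qed.

Lemma limn_einf_le u b : (forall n, u n <= b) -> limn_einf u <= b.
Proof.
move=> h; rewrite limn_einf_lim; apply: lime_le; first exact: is_cvg_einfs.
apply: nearW => n; apply: le_trans (h n); apply: ereal_inf_lbound.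
by exists n => /=.
Qed.

Lemma cvg_le_limn_einf u v l : u n @[n --> \oo] --> l ->
  (forall n, u n <= v n) -> l <= limn_einf v.
Proof.
move=> cu h; rewrite -(cvg_limn_einf_sup cu).1 !limn_einf_lim.
apply: lee_lim; [exact: is_cvg_einfs|exact: is_cvg_einfs|].
apply: nearW => n; apply: le_ereal_inf_tmp => _ [k hk <-].
by apply: le_trans (h k); apply: ereal_inf_lbound; exists k.
Qed.

End LiminfFacts.

(* Monotonicity of the integral of nonnegative functions, without any
   measurability assumption (the integral is then the sup over simple minorants). *)
Lemma ge0_le_integral_nm d (T : measurableType d) (R : realType)
  (mu : {measure set T -> \bar R}) (f1 f2 : T -> \bar R) :
  (forall x, 0 <= f1 x)%E -> (forall x, f1 x <= f2 x)%E ->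
  (\int[mu]_x f1 x <= \int[mu]_x f2 x)%E.
Proof.
move=> f10 f12; have f20 x : (0 <= f2 x)%E by exact: le_trans (f10 x) (f12 x).
rewrite !ge0_integralTE //; apply: ereal_sup_le => _ [h hf <-]; exists h => //.
by move=> x; exact: le_trans (hf x) (f12 x).
Qed.

Section SecondMoment.
Context d (T : measurableType d) (R : realType) (P : probability T R).

Lemma sq_le_expR (y : R) : y ^+ 2 <= 4 * (expR y + expR (- y)).
Proof.
have h1 := expR_ge1Dx (`|y| / 2); have hn := normr_ge0 y.
have e : expR `|y| = expR (`|y| / 2) * expR (`|y| / 2) by rewrite -expRD; congr expR; lra.
have b : y ^+ 2 <= 4 * expR `|y| by rewrite -real_normK ?num_real // e; nra.
apply: le_trans b _; rewrite ler_pM2l //.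
have p1 := expR_ge0 y; have p2 := expR_ge0 (- y).
by case: (ger0P y) => _; lra.
Qed.

Lemma subG_mgf_le (X : T -> R) nu lam : subG P nu X ->
  (\int[P]_w (mgf_centered P X lam w)%:E <= (expR (lam ^+ 2 * nu / 2))%:E)%E.
Proof.
case=> _ /(_ lam) []; rewrite expectation.unlock => hfin hln.
set E := (\int[P]_w _)%E in hfin hln *.
have E0 : (0 <= E)%E by apply: integral_ge0 => w _; rewrite lee_fin expR_ge0.
have Efin : E \is a fin_num by rewrite ge0_fin_numE.
rewrite -(fineK Efin) lee_fin.
have [E0'|] := ltP 0 (fine E); last by move/le_trans; apply; exact: expR_ge0.
by rewrite -(lnK E0') ler_expR.
Qed.

(* |EX| <= E|X|, so the mean is controlled by the first absolute moment. *)
Lemma sq_mean_le (X : {RV P >-> R}) S : P.-integrable setT (EFin \o X) ->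
  ('E_P[fun w => (`|X w|)%R] <= S%:E)%E -> fine ('E_P[X])%E ^+ 2 <= S ^+ 2.
Proof.
move=> iX hS; have mXE : measurable_fun setT (EFin \o (X : T -> R)).
  exact/measurable_EFinP/measurable_funPT.
have Efin : ('E_P[X])%E \is a fin_num.
  by rewrite expectation.unlock -integral_fin_num_abs //; case/integrableP: iX.
have : (`|fine ('E_P[X])%E|%:E <= S%:E)%E.
  have -> : (`|fine ('E_P[X])%E|%:E = `|'E_P[X]|)%E by rewrite -[in RHS](fineK Efin).
  apply: le_trans hS; rewrite !expectation.unlock.
  exact: (le_abse_integral P measurableT mXE).
rewrite lee_fin -(real_normK (num_real (fine _))) => h.
by rewrite ler_sqr ?nnegrE // (le_trans (normr_ge0 _) h).
Qed.

Lemma sq_le_mgf (X : T -> R) w :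
  X w ^+ 2 <= 8 * mgf_centered P X 1 w + 8 * mgf_centered P X (-1) w +
              2 * fine ('E_P[X])%E ^+ 2.
Proof.
rewrite /mgf_centered mul1r mulN1r; set m := fine _.
by have := sq_le_expR (X w - m); have := sqr_ge0 (X w - m - m); rewrite !expr2; nra.
Qed.

Lemma subG_second_moment (X : {RV P >-> R}) nu S : subG P nu X ->
  ('E_P[fun w => (`|X w|)%R] <= S%:E)%E ->
  (\int[P]_w ((X w) ^+ 2)%:E <= (16 * expR (nu / 2) + 2 * S ^+ 2)%:E)%E.
Proof.
move=> hX hS; have mX : measurable_fun setT X by exact: measurable_funPT.
have hm := sq_mean_le hX.1 hS; set m := fine ('E_P[X])%E in hm.
have mgf_meas lam : measurable_fun setT (fun w => (mgf_centered P X lam w)%:E : \bar R).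
  apply/measurable_EFinP; apply: measurableT_comp => //.
  by apply: measurable_funM => //; exact: measurable_funB.
have mgf8_meas lam : measurable_fun setT (fun w => 8%:E * (mgf_centered P X lam w)%:E)%E.
  exact: emeasurable_funM.
have mgf8_ge0 lam w : [set: T] w -> (0 <= 8%:E * (mgf_centered P X lam w)%:E)%E.
  by move=> _; rewrite mule_ge0 // lee_fin expR_ge0.
have g1 := subG_mgf_le 1 hX; have g2 := subG_mgf_le (-1) hX.
rewrite expr1n mul1r in g1; rewrite sqrrN expr1n mul1r in g2.
apply: le_trans (_ : _ <= \int[P]_w ((8 * mgf_centered P X 1 w +
    8 * mgf_centered P X (-1) w + 2 * m ^+ 2)%:E))%E _.
  apply: ge0_le_integral => //.
  - by move=> w _; rewrite lee_fin sqr_ge0.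
  - exact/measurable_EFinP/measurable_funX.
  - apply/measurable_EFinP; apply: measurable_funD => //; apply: measurable_funD => //;
      apply: measurable_funM => //; apply/measurable_EFinP; exact: mgf_meas.
  - by move=> w _; rewrite lee_fin; exact: sq_le_mgf.
under eq_integral do rewrite !EFinD !EFinM.
rewrite ge0_integralD //; first last.
- by move=> w _; rewrite lee_fin mulr_ge0 // -expr2 sqr_ge0.
- exact: emeasurable_funD.
- by move=> w _; rewrite adde_ge0 // mgf8_ge0.
have int_cst : (\int[P]_w (2%:E * (m%:E * m%:E)) = 2%:E * (m%:E * m%:E))%E.
  rewrite (integral_cst P measurableT) [X in (_ * X)%E](_ : _ = 1%E) ?mule1 //.
  exact: probability_setT.
rewrite ge0_integralD //; [|exact: mgf8_ge0|exact: mgf8_ge0].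
rewrite [X in (_ + X <= _)%E]int_cst.
rewrite !ge0_integralZl_EFin //; last 2 first.
- by move=> w _; rewrite lee_fin expR_ge0.
- by move=> w _; rewrite lee_fin expR_ge0.
apply: le_trans (leeD (leeD (lee_wpmul2l _ g1) (lee_wpmul2l _ g2)) (lexx _)) _ => //.
by rewrite -!EFinM -!EFinD lee_fin -expr2; lra.
Qed.

End SecondMoment.

Section HaarWeights.
Variable R : realType.
Implicit Types (x y dl : R) (I : dyad).

Definition box_index (N i l : nat) : dyad := ((i%:Z - N%:Z)%R, (l%:Z - (4 ^ N)%:Z)%R).

Definition box_sum (N : nat) (F : dyad -> R) : R :=
  \sum_(i < (N.*2).+1) \sum_(l < (4 ^ N).*2.+1) F (box_index N i l).

Lemma KpartE (T : Type) (a : dyad -> T -> R) x y N w :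
  Kpart a x y N w = box_sum N (fun I => a I w * haarI I x * haarI I y).
Proof. by []. Qed.

(* The largest possible value of |psi_I(x) psi_I(y)| at level j when
   delta(x, y) = dl: an interval of length 2^-j < dl cannot contain x and y. *)
Definition level_weight dl (j : int) : R := if (2:R) ^ j * dl <= 1 then 2 ^ j else 0.

Lemma level_weight_ge0 dl j : 0 <= level_weight dl j.
Proof. by rewrite /level_weight; case: ifP => // _; exact/ltW/pow2_gt0. Qed.

Lemma haar_prod_le_level_weight I x y : 0 <= x ->
  `|haarI I x * haarI I y| <= level_weight (ddist x y) I.1.
Proof.
move=> x0; apply: le_trans (haarI_prod_le I x y) _.
case: (boolP (in_dyadic I x && in_dyadic I y)) => [/andP[hx hy]|_];
  last by rewrite mulr0 level_weight_ge0.
rewrite mulr1 /level_weight ifT //; have := ddist_le x0 hx hy.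
by rewrite -invr_expz -[X in _ <= X]mulr1 ler_pdivlMl // pow2_gt0.
Qed.

(* Geometric series: sum_{j <= log2 (1/dl)} 2^j <= 2 / dl. *)
Lemma level_weight_sum_le (N n : nat) dl : 0 < dl ->
  \sum_(i < n) level_weight dl (i%:Z - N%:Z) <= (2:R) ^ (n%:Z - N%:Z) /\
  \sum_(i < n) level_weight dl (i%:Z - N%:Z) <= 2 / dl.
Proof.
move=> d0; elim: n => [|n [IH1 IH2]].
  by rewrite big_ord0; split; [exact/ltW/pow2_gt0 | rewrite divr_ge0 // ltW].
have e : (2:R) ^ (n.+1%:Z - N%:Z) = 2 * 2 ^ (n%:Z - N%:Z).
  rewrite (_ : n.+1%:Z - N%:Z = (n%:Z - N%:Z) + 1); last by lia.
  by rewrite expfzDr ?pnatr_eq0 // expr1z mulrC.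
have S0 : 0 <= \sum_(i < n) level_weight dl (i%:Z - N%:Z).
  by apply: sumr_ge0 => i _; exact: level_weight_ge0.
rewrite big_ord_recr /= e /level_weight.
move: IH1 IH2 S0; set S := \sum_(i < n) _; set p := (2:R) ^ (n%:Z - N%:Z).
have p0 : 0 < p by exact: pow2_gt0.
case: ifP => h IH1 IH2 S0; rewrite ?addr0; split; try lra.
have : p <= 1 / dl by rewrite ler_pdivlMr.
by move: IH1; clear -d0; lra.
Qed.

(* The estimate behind (a): sum_I |psi_I(x) psi_I(y)| <= 2 / delta(x, y).  At
   each level at most one interval contains x, and its contribution is bounded
   by the level weight. *)
Lemma haar_weight_sum_le x y N : 0 <= x -> 0 < ddist x y ->
  box_sum N (fun I => `|haarI I x * haarI I y|) <= 2 / ddist x y.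
Proof.
move=> x0 d0; set dl := ddist x y.
apply: le_trans (level_weight_sum_le N (N.*2).+1 d0).2.
apply: ler_sum => i _; apply: sum_at_most_one_le; first exact: level_weight_ge0.
  by move=> l; rewrite normr_ge0 haar_prod_le_level_weight.
move=> l l' hl hl'; apply: val_inj => /=.
have support (m : 'I_(4 ^ N).*2.+1) : `|haarI (box_index N i m) x * haarI (box_index N i m) y| != 0 ->
    in_dyadic (box_index N i m) x.
  by move=> hm; apply: haarI_support; apply: contraNneq hm => ->; rewrite mul0r normr0.
by have := in_dyadic_uniq (support _ hl) (support _ hl'); lia.
Qed.

End HaarWeights.

Lemma Lnorm2_le d (T : measurableType d) (R : realType) (mu : {measure set T -> \bar R})
  (f : T -> R) (c : R) : 0 <= c ->
  (\int[mu]_w ((f w) ^+ 2)%:E <= (c ^+ 2)%:E)%E -> ('N[mu]_2%:E[EFin \o f] <= c%:E)%E.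
Proof.
move=> c0 hint; rewrite Lnorm.unlock /=.
have sq w : (`|f w| `^ 2)%:E = ((f w) ^+ 2)%:E :> \bar R.
  by rewrite -[2%R]/(2%:R) powR_mulrn ?normr_ge0 // real_normK // num_real.
under eq_integral do rewrite sq.
set X := (\int[mu]_w _)%E in hint *.
have X0 : (0 <= X)%E by apply: integral_ge0 => w _; rewrite lee_fin sqr_ge0.
have half0 : (0:R) <= 2^-1 by rewrite invr_ge0.
have := @gt0_ler_poweR R 2^-1 _ X (c ^+ 2)%:E.
rewrite !in_itv /= X0 !leey lee_fin sqr_ge0 => /(_ half0 isT isT hint).
by rewrite powR12_sqrt ?sqr_ge0 // sqrtr_sqr ger0_norm.
Qed.

Section KernelL2.
Context d (T : measurableType d) (R : realType) (P : probability T R).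
Variable a : dyad -> {RV P >-> R}.
Local Notation A := (fun I => (a I : T -> R)).

Lemma A_measurable I : measurable_fun setT (A I).
Proof. exact: measurable_funPT. Qed.

(* Cauchy-Schwarz with weights c_I = |psi_I(x) psi_I(y)|:
   (Kpart)^2 <= (sum_I c_I) (sum_I c_I a_I^2) <= 2/delta * sum_I c_I a_I^2. *)
Lemma Kpart_sq_le x y N w : 0 <= x -> 0 < ddist x y ->
  (Kpart A x y N w) ^+ 2 <=
  2 / ddist x y * box_sum N (fun I => `|haarI I x * haarI I y| * (A I w) ^+ 2).
Proof.
move=> x0 d0; rewrite KpartE /box_sum; set c := fun I => `|haarI I x * haarI I y|.
have termwise I : (A I w * haarI I x * haarI I y) ^+ 2 <= c I * (c I * A I w ^+ 2).
  by rewrite mulrA -expr2 /c real_normK ?num_real // -mulrA exprMn mulrC.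
have Q0 I : 0 <= c I * A I w ^+ 2 by apply: mulr_ge0; [exact: normr_ge0 | exact: sqr_ge0].
have row (i : 'I_(N.*2).+1) :
  (\sum_(l < (4 ^ N).*2.+1) A (box_index N i l) w * haarI (box_index N i l) x *
      haarI (box_index N i l) y) ^+ 2 <=
  (\sum_(l < (4 ^ N).*2.+1) c (box_index N i l)) *
  (\sum_(l < (4 ^ N).*2.+1) c (box_index N i l) * A (box_index N i l) w ^+ 2).
  by apply: cauchy_schwarz => // l; exact: normr_ge0.
apply: le_trans (cauchy_schwarz _ _ _ row) _.
- by move=> i; apply: sumr_ge0 => l _; exact: normr_ge0.
- by move=> i; apply: sumr_ge0 => l _; exact: Q0.
apply: ler_wpM2r; first by apply: sumr_ge0 => i _; apply: sumr_ge0 => l _; exact: Q0.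
exact: haar_weight_sum_le.
Qed.

Lemma integral_box_le N (c : dyad -> R) (C k : R) : 0 <= k -> (forall I, 0 <= c I) ->
  (forall I, (\int[P]_w ((A I w) ^+ 2)%:E <= C%:E)%E) ->
  (\int[P]_w ((k * box_sum N (fun I => c I * (A I w) ^+ 2))%:E)
     <= (k * C * box_sum N c)%:E)%E.
Proof.
move=> k0 c0 hC.
have term_meas I r : measurable_fun setT (fun w => ((r * A I w ^+ 2)%:E : \bar R)).
  by apply/measurable_EFinP; apply: measurable_funM => //; exact/measurable_funX/A_measurable.
have term_ge0 I r w : 0 <= r -> (0 <= ((r * A I w ^+ 2)%:E : \bar R))%E.
  by move=> r0; rewrite lee_fin mulr_ge0 // sqr_ge0.
have term_le I : (\int[P]_w ((k * c I) * A I w ^+ 2)%:E <= ((k * c I) * C)%:E)%E.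
  under eq_integral do rewrite EFinM.
  rewrite ge0_integralZl_EFin //.
  - by rewrite [X in (_ <= X)%E]EFinM; apply: lee_wpmul2l => //; rewrite lee_fin mulr_ge0.
  - by move=> w _; rewrite lee_fin sqr_ge0.
  - exact/measurable_EFinP/measurable_funX/A_measurable.
  - exact: mulr_ge0.
have split_lhs w : (k * box_sum N (fun I => c I * A I w ^+ 2))%:E = (\sum_(i < (N.*2).+1)
    \sum_(l < (4 ^ N).*2.+1) ((k * c (box_index N i l)) * A (box_index N i l) w ^+ 2)%:E)%E.
  rewrite /box_sum mulr_sumr -sumEFin; apply: eq_bigr => i _.
  by rewrite mulr_sumr -sumEFin; apply: eq_bigr => l _; rewrite mulrA.
have split_rhs : (k * C * box_sum N c)%:E = (\sum_(i < (N.*2).+1)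
    \sum_(l < (4 ^ N).*2.+1) ((k * c (box_index N i l)) * C)%:E)%E.
  rewrite /box_sum mulr_sumr -sumEFin; apply: eq_bigr => i _.
  by rewrite mulr_sumr -sumEFin; apply: eq_bigr => l _; rewrite mulrAC.
under eq_integral do rewrite split_lhs.
rewrite split_rhs ge0_integral_sum //; first last.
- by move=> i w _; apply: sume_ge0 => l _; rewrite term_ge0 ?mulr_ge0.
- by move=> i; apply: emeasurable_sum => l; exact: term_meas.
apply: lee_sum => i _; rewrite ge0_integral_sum //; last first.
  by move=> l w _; rewrite term_ge0 ?mulr_ge0.
by apply: lee_sum => l _; exact: term_le.
Qed.

(* Pointwise, K^2 is bounded by the liminf of the weighted sums of a_I^2:
   either the partial sums converge, and Kpart_sq_le passes to the limit, or
   K = 0 by definition of the limit. *)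
Lemma Ksq_le_liminf x y w : 0 <= x -> 0 < ddist x y -> (((Kfun A x y w) ^+ 2)%:E <=
  limn_einf (fun N => (2 / ddist x y *
    box_sum N (fun I => `|haarI I x * haarI I y| * (A I w) ^+ 2))%:E))%E.
Proof.
move=> x0 d0; have [cv|ncv] := pselect (cvgn (fun N => Kpart A x y N w)).
  apply: (@cvg_le_limn_einf _ (fun N => ((Kpart A x y N w) ^+ 2)%:E)).
    by apply: cvg_EFin; [exact: nearW | exact: cvgM].
  by move=> N; rewrite lee_fin; exact: Kpart_sq_le.
have -> : Kfun A x y w = 0.
  rewrite /Kfun /lim /lim_in; apply: getPN => l hl; apply: ncv.
  by apply/cvg_ex; exists l.
rewrite expr0n /=; apply: limn_einf_ge0 => N; rewrite lee_fin mulr_ge0 ?divr_ge0 ?(ltW d0) //.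
by rewrite /box_sum; apply: sumr_ge0 => i _; apply: sumr_ge0 => l _; rewrite mulr_ge0 ?sqr_ge0.
Qed.

(* Fatou's lemma: E K^2 <= liminf_N E[2/delta sum_I c_I a_I^2] <= (2/delta)^2 C. *)
Lemma integral_Ksq_le x y (C : R) : 0 <= x -> 0 < ddist x y -> 0 <= C ->
  (forall I, (\int[P]_w ((A I w) ^+ 2)%:E <= C%:E)%E) ->
  (\int[P]_w ((Kfun A x y w) ^+ 2)%:E <= ((2 * Num.sqrt C / ddist x y) ^+ 2)%:E)%E.
Proof.
move=> x0 d0 C0 hC; set k := 2 / ddist x y; have k0 : 0 <= k by rewrite divr_ge0 ?ltW.
set G := fun N w => k * box_sum N (fun I => `|haarI I x * haarI I y| * (A I w) ^+ 2).
have G_meas N : measurable_fun setT (fun w => (G N w)%:E : \bar R).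
  apply/measurable_EFinP; apply: measurable_funM => //.
  apply: measurable_sum => i; apply: measurable_sum => l.
  by apply: measurable_funM => //; exact/measurable_funX/A_measurable.
have G_ge0 N w : (0 <= (G N w)%:E)%E.
  rewrite lee_fin mulr_ge0 // /box_sum; apply: sumr_ge0 => i _; apply: sumr_ge0 => l _.
  by rewrite mulr_ge0 ?sqr_ge0.
have Ksq_ge0 w : (0 <= ((Kfun A x y w) ^+ 2)%:E)%E by rewrite lee_fin sqr_ge0.
apply: le_trans (ge0_le_integral_nm P Ksq_ge0 (fun w => Ksq_le_liminf w x0 d0)) _.
apply: le_trans (fatou P measurableT G_meas (fun N w _ => G_ge0 N w)) _.
apply: limn_einf_le => N.
apply: le_trans (integral_box_le N k0 (fun I => normr_ge0 _) hC) _.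
have -> : (2 * Num.sqrt C / ddist x y) ^+ 2 = k * C * k.
  by rewrite /k mulrAC exprMn sqr_sqrtr // expr2 mulrAC.
by rewrite lee_fin ler_wpM2l ?(mulr_ge0 k0 C0) //; exact: haar_weight_sum_le.
Qed.

Lemma Kfun_L2_le x y (C : R) : 0 <= x -> 0 <= y -> x != y -> 0 <= C ->
  (forall I, (\int[P]_w ((A I w) ^+ 2)%:E <= C%:E)%E) ->
  ('N[P]_2%:E[EFin \o Kfun A x y] <= (2 * Num.sqrt C / ddist x y)%:E)%E.
Proof.
move=> x0 y0 xy C0 hC; have d0 := ddist_gt0 x0 y0 xy.
apply: Lnorm2_le; last exact: integral_Ksq_le.
by rewrite divr_ge0 ?mulr_ge0 ?sqrtr_ge0 ?ltW.
Qed.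

End KernelL2.

Lemma esum_terms_bounded (R : realType) (I : choiceType) (f : I -> \bar R) :
  (forall i, 0 <= f i)%E -> (\esum_(i in [set: I]) f i < +oo)%E ->
  exists S : R, forall i, (f i <= S%:E)%E.
Proof.
move=> f0 fin; have sum0 : (0 <= \esum_(i in [set: I]) f i)%E by apply: esum_ge0.
exists (fine (\esum_(i in [set: I]) f i)) => i; rewrite fineK ?ge0_fin_numE //.
apply: esum_ge; exists [set i]; first by split; [exact: finite_set1 | exact: subsetT].
by rewrite fsbig_set1.
Qed.

Lemma Kfun_ext (T : Type) (R : realType) (a : dyad -> T -> R) x y x' y' w :
  (forall I, haarI I x' * haarI I y' = haarI I x * haarI I y) ->
  Kfun a x' y' w = Kfun a x y w.
Proof.
move=> h; rewrite /Kfun (_ : (fun N => Kpart a x' y' N w) = (fun N => Kpart a x y N w)) //.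
apply: funext => N; rewrite !KpartE.
by apply: eq_bigr => i _; apply: eq_bigr => l _; rewrite /= -[LHS]mulrA -[RHS]mulrA h.
Qed.

(* Parts (b.i) and (b.ii): under the separation condition the kernel does not
   move at all, so the differences vanish identically. *)
Lemma Kfun_move_x (T : Type) (R : realType) (a : dyad -> T -> R) x y x' w :
  0 <= x -> 0 <= y -> 0 <= x' -> x != y -> 2 * ddist x' x <= ddist x y ->
  Kfun a x' y w = Kfun a x y w.
Proof. by move=> *; apply: Kfun_ext; exact: haarI_prod_stable. Qed.

Lemma Kfun_move_y (T : Type) (R : realType) (a : dyad -> T -> R) x y y' w :
  0 <= x -> 0 <= y -> 0 <= y' -> x != y -> 2 * ddist y' y <= ddist x y ->
  Kfun a x y' w = Kfun a x y w.
Proof.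
move=> x0 y0 y'0 xy hd; have yx : y != x by rewrite eq_sym.
have hd' : 2 * ddist y' y <= ddist y x by rewrite (ddistC y x).
apply: Kfun_ext => I; rewrite ![haarI I x * _]mulrC.
exact: haarI_prod_stable y0 x0 y'0 yx hd' I.
Qed.

Lemma Lnorm_sub_eq0 d (T : measurableType d) (R : realType) (mu : {measure set T -> \bar R})
  (p : \bar R) (f g : T -> R) : p != 0%E -> (forall w, f w = g w) ->
  ('N[mu]_p[(fun w => (f w - g w)%R%:E)] = 0)%E.
Proof.
move=> p0 fg; have -> : (fun w => (f w - g w)%R%:E) = cst 0%E.
  by apply: funext => w; rewrite fg subrr.
exact: Lnorm0.
Qed.

Theorem theorem5p1 (d : measure_display) (T : measurableType d) (R : realType)
  (P : probability T R) (a : dyad -> {RV P >-> R}) (nu : R) :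
  0 < nu ->
  independent_family P (fun I => a I : T -> R) ->
  (\esum_(I in [set: dyad]) 'E_P[fun w => (`|a I w|)%R] < +oo)%E ->
  (forall I, subG P nu (a I)) ->
  exists B : R, forall x y x' y' : R,
    0 <= x -> 0 <= y -> 0 <= x' -> 0 <= y' -> x != y ->
    ('N[P]_2%:E[EFin \o Kfun (fun I => a I : T -> R) x y]
        <= (B / ddist x y)%:E)%E /\
    (2 * ddist x' x <= ddist x y ->
      ('N[P]_2%:E[(fun w => (Kfun (fun I => a I : T -> R) x' y w
                          - Kfun (fun I => a I : T -> R) x y w)%R%:E)]
        <= (B * ddist x' x / ddist x y ^+ 2)%:E)%E) /\
    (2 * ddist y' y <= ddist x y ->
      ('N[P]_2%:E[(fun w => (Kfun (fun I => a I : T -> R) x y' w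
                          - Kfun (fun I => a I : T -> R) x y w)%R%:E)]
        <= (B * ddist y' y / ddist x y ^+ 2)%:E)%E).
Proof.
move=> _ _ hsum hsub.
have [S hS] : exists S : R, forall I, ('E_P[fun w => (`|a I w|)%R] <= S%:E)%E.
  apply: esum_terms_bounded hsum => I; rewrite expectation.unlock.
  by apply: integral_ge0 => w _; rewrite lee_fin normr_ge0.
set C := 16 * expR (nu / 2) + 2 * S ^+ 2.
have C0 : 0 <= C by rewrite /C addr_ge0 // mulr_ge0 // ?expR_ge0 // sqr_ge0.
have hC I : (\int[P]_w ((a I w) ^+ 2)%:E <= C%:E)%E.
  exact: subG_second_moment (hsub I) (hS I).
exists (2 * Num.sqrt C) => x y x' y' x0 y0 x'0 y'0 xy.
have rhs_ge0 u : 0 <= u -> (0 <= (2 * Num.sqrt C * u / ddist x y ^+ 2)%:E)%E.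
  by move=> u0; rewrite lee_fin divr_ge0 ?sqr_ge0 // !mulr_ge0 ?sqrtr_ge0.
split; first exact: Kfun_L2_le.
split=> hd; rewrite Lnorm_sub_eq0 ?rhs_ge0 ?ddist_ge0 // => w.
- exact: Kfun_move_x.
- exact: Kfun_move_y.
Qed.
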